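(* Consider the Boosting SDP for input matrix $\hat A\in\mathbb R^{n\times n}$, labels $\ell\in\{-1,1\}^n$ with $L=\ell\ell^T$, and parameters $0<\zeta<1$, $d>0$, $K\ge10^4$. Let $\tilde\ell\in\{-1,1\}^n$ agree with $\ell$ on at least $(1-\theta)n$ coordinates, where $\theta\le\zeta$, and let $\tilde L=\tilde\ell\tilde\ell^T$. Suppose that for some $\gamma\le\zeta$ there are a subset $S\subseteq[n]$ with $|S|\ge(1-\gamma)n$ and an $n\times n$ matrix $F$ such that: (i) $(F\odot\tilde L)_{S\times S}$ is entrywise nonnegative; (ii) $(\hat A-F)_{S\times S}=Y+Z$ with $\|Y\|_{\mathrm{op}}\le Kd$ and $|Z_{ij}|\le Kd/(\zeta n)$ for all $i,j$; (iii) $((\hat A-F)\odot\tilde L)_{S\times S}$ is $(10dK^3,\gamma dK)$-resolvable. Then for any feasible solution of the Boosting SDP with $\rho\le\theta+\gamma$, the number of $i\in S$ with $w_i\le1-1/\sqrt K$ and $\ell_i\ne\tilde\ell_i$ is at most $10(\theta+\gamma)n/\sqrt K$.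
   Context: Notation: $J$ all-ones matrix, $\odot$ entrywise product, $\langle X,Y\rangle=\sum_{ij}X_{ij}Y_{ij}$, $\|\cdot\|_1$ trace norm, $\|\cdot\|_{\mathrm{op}}$ operator norm, $M_{S\times T}$ submatrix indexed by $S\times T$. Resolvability: an $m\times m$ matrix $X$ is $(d_1,d_2)$-resolvable if for all $x_1,\dots,x_m\in[0,1]$ with $\sum_ix_i\le10^{-6}m$, $\langle X,Y_x\rangle\ge d_1\sum_ix_i-d_2m$, where $(Y_x)_{ij}=x_i$. Pseudorectangles: $\mathcal R_n(\theta)$ is the set of $n\times n$ matrices $M$ with $0\le M_{ij}\le1$, $\sum_{ij}|M_{ij}|\le\theta^2n^2$, $\|M\|_1\le\theta n$. Approximate row selectors: $(M,x_1,\dots,x_n)\in\mathcal S_n(\theta,\delta)$ if $0\le M_{ij}\le1$, $0\le x_i\le1$, $\sum_ix_i\le\theta n$, and $M=Y_x-N$ for some $N\in\mathcal R_n(\sqrt{\theta\delta})$. Boosting SDP (inputs $\hat A,\ell$, parameters $\zeta,d,K$ with $0<\zeta<1$, $K\ge10^4$): variables $\rho\in[0,\zeta]$, $w\in\mathbb R^n$, $W\in\mathbb R^{n\times n}$, $N\in\mathcal R_n(\rho)$ with $0\le w_i\le1$, $\sum_iw_i\le\rho n$, $W_{ij}\ge0$, $W_{ij}=1-w_i-w_j+N_{ij}$ for all $i,j$, and for every $\rho'$ with $\rho/K\le\rho'\le\zeta$ and every $(M,x)\in\mathcal S_n(\rho',K\rho')$: $\langle\hat A\odot L\odot W,M\rangle\ge10dK^2\big(K\sum_ix_i(1-w_i)-\rho'n\big)$,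 where $L=\ell\ell^T$. Objective: minimize $\rho$. *)

From mathcomp Require Import all_boot all_order all_algebra.
From mathcomp Require Import all_classical all_reals.
Set Implicit Arguments. Unset Strict Implicit. Unset Printing Implicit Defensive.
Import Order.TTheory GRing.Theory Num.Theory.
Local Open Scope ring_scope.

Section Defs.
Variable R : realType.

Definition hadamard m p (A B : 'M[R]_(m, p)) : 'M[R]_(m, p) :=
  \matrix_(i, j) (A i j * B i j).

Definition frob m p (A B : 'M[R]_(m, p)) : R :=
  \sum_i \sum_j A i j * B i j.

Definition opnorm m p (M : 'M[R]_(m, p)) : R :=
  sup [set r : R | exists (u : 'I_m -> R) (v : 'I_p -> R),
        \sum_i u i ^+ 2 <= 1 /\ \sum_j v j ^+ 2 <= 1 /\
        r = `| \sum_i \sum_j u i * M i j * v j |]%classic.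

Definition tracenorm n (M : 'M[R]_n) : R :=
  sup [set r : R | exists B : 'M[R]_n, opnorm B <= 1 /\ r = frob M B]%classic.

(* submatrix M_{S x S}, indices of S enumerated in increasing order *)
Definition submxSS n (S : {set 'I_n}) (M : 'M[R]_n) : 'M[R]_#|S| :=
  \matrix_(i, j) M (enum_val i) (enum_val j).

Definition rowmat n (x : 'I_n -> R) : 'M[R]_n := \matrix_(i, j) x i.

Definition outer n (l : 'I_n -> R) : 'M[R]_n := \matrix_(i, j) (l i * l j).

Definition is_sign_vector n (l : 'I_n -> R) : Prop :=
  forall i, l i = 1 \/ l i = -1.

Definition resolvable m (X : 'M[R]_m) (d1 d2 : R) : Prop :=
  forall x : 'I_m -> R,
    (forall i, 0 <= x i <= 1) ->
    \sum_i x i <= 10 ^- 6 * m%:R ->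
    frob X (rowmat x) >= d1 * (\sum_i x i) - d2 * m%:R.

Definition pseudorect n (theta : R) (M : 'M[R]_n) : Prop :=
  (forall i j, 0 <= M i j <= 1) /\
  \sum_i \sum_j `|M i j| <= theta ^+ 2 * n%:R ^+ 2 /\
  tracenorm M <= theta * n%:R.

Definition rowsel n (theta delta : R) (M : 'M[R]_n) (x : 'I_n -> R) : Prop :=
  (forall i j, 0 <= M i j <= 1) /\
  (forall i, 0 <= x i <= 1) /\
  \sum_i x i <= theta * n%:R /\
  exists N : 'M[R]_n,
    pseudorect (Num.sqrt (theta * delta)) N /\ M = rowmat x - N.

Definition boosting_feasible n (Ahat : 'M[R]_n) (l : 'I_n -> R)
    (zeta d K : R) (rho : R) (w : 'I_n -> R) (W N : 'M[R]_n) : Prop :=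
  0 <= rho <= zeta /\
  pseudorect rho N /\
  (forall i, 0 <= w i <= 1) /\
  \sum_i w i <= rho * n%:R /\
  (forall i j, 0 <= W i j) /\
  (forall i j, W i j = 1 - w i - w j + N i j) /\
  (forall (rho' : R) (M : 'M[R]_n) (x : 'I_n -> R),
     rho / K <= rho' <= zeta ->
     rowsel rho' (K * rho') M x ->
     frob (hadamard (hadamard Ahat (outer l)) W) M >=
       10 * d * K ^+ 2 * (K * (\sum_i x i * (1 - w i)) - rho' * n%:R)).

End Defs.

(* Let B be the set of bad rows, b = |B|, and G the set of rows of S on which
   l and lt2 agree.  Testing the resolvability of the signed submatrix
   ((Ahat - F) o lt2 lt2^T)_{SxS} = (Y + Z) o lt2 lt2^T on the constant vector
   10^-6 is incompatible with the bounds on Y and Z unless zeta <= 10^-7.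
   For such zeta, the row selector M_ij = [i in B][j in G] differs from the
   indicator rows of B by a rank-one matrix of small trace norm, so the SDP
   constraint with rho' = b/n gives
     <Ahat o L o W, M> >= 10 d K^2 (K X - b),   X = sum_(i in B) (1 - w_i).
   On B x G we have l_i l_j = - lt2_i lt2_j, so the F-part of Ahat only lowers
   <Ahat o L o W, M>; substituting W_ij = 1 - w_i - w_j + N_ij leaves minus a
   resolvability term (at least 10 d K^3 X - gamma d K |S|), two bilinear forms
   controlled by |Y|_op and the entry bound on Z, and a term in N controlled
   by trace-norm duality.  As X >= b / sqrt K on B, the two estimates are
   incompatible once b > 10 (theta + gamma) n / sqrt K. *)

From mathcomp Require Import all_boot all_order all_algebra.
From mathcomp Require Import all_classical all_reals.
From mathcomp Require Import ring lra.
Import Order.TTheory GRing.Theory Num.Theory.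
Local Open Scope ring_scope.

Set Implicit Arguments. Unset Strict Implicit. Unset Printing Implicit Defensive.

Section MatrixNorms.
Variable R : realType.

Definition bilin m p (u : 'I_m -> R) (M : 'M[R]_(m, p)) (v : 'I_p -> R) : R :=
  \sum_i \sum_j u i * M i j * v j.

Lemma sum_sqr_ge0 m (u : 'I_m -> R) : 0 <= \sum_i u i ^+ 2.
Proof. by apply: sumr_ge0 => i _; exact: sqr_ge0. Qed.

Lemma sqr_le_sum_sqr m (u : 'I_m -> R) i : u i ^+ 2 <= \sum_k u k ^+ 2.
Proof. by rewrite (bigD1 i) //= lerDl sumr_ge0 // => k _; exact: sqr_ge0. Qed.

Lemma sum_sqr_le1_norm m (u : 'I_m -> R) i : \sum_k u k ^+ 2 <= 1 -> `|u i| <= 1.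
Proof.
move=> /(le_trans (sqr_le_sum_sqr u i)); rewrite -real_normK ?num_real // => h.
by have := normr_ge0 (u i); nra.
Qed.

Lemma bilinDm m p (u : 'I_m -> R) (M1 M2 : 'M[R]_(m, p)) v :
  bilin u (M1 + M2) v = bilin u M1 v + bilin u M2 v.
Proof.
rewrite /bilin -big_split; apply: eq_bigr => i _.
by rewrite -big_split; apply: eq_bigr => j _; rewrite mxE /=; ring.
Qed.

Lemma bilin0l m p (M : 'M[R]_(m, p)) v : bilin (fun=> 0) M v = 0.
Proof. by rewrite /bilin big1 // => i _; rewrite big1 // => j _; rewrite !mul0r. Qed.

Lemma bilin0r m p (u : 'I_m -> R) (M : 'M[R]_(m, p)) : bilin u M (fun=> 0) = 0.
Proof. by rewrite /bilin big1 // => i _; rewrite big1 // => j _; rewrite mulr0. Qed.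

Lemma bilinZl m p a (u : 'I_m -> R) (M : 'M[R]_(m, p)) v :
  bilin (fun i => a * u i) M v = a * bilin u M v.
Proof.
rewrite /bilin mulr_sumr; apply: eq_bigr => i _.
by rewrite mulr_sumr; apply: eq_bigr => j _; rewrite !mulrA.
Qed.

Lemma sum_sqr_le_sum_norm m (u : 'I_m -> R) :
  (forall i, `|u i| <= 1) -> \sum_i u i ^+ 2 <= \sum_i `|u i|.
Proof.
move=> u1; apply: ler_sum => i _.
by rewrite -real_normK ?num_real // expr2 ler_piMr ?u1.
Qed.

Lemma bilin_le_max_entry m p (M : 'M[R]_(m, p)) c u v :
  (forall i j, `|M i j| <= c) ->
  `|bilin u M v| <= c * (\sum_i `|u i|) * (\sum_j `|v j|).
Proof.
move=> hc; apply: (le_trans (ler_norm_sum _ _ _)).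
rewrite [c * _]mulrC -mulrA mulr_suml; apply: ler_sum => i _.
apply: (le_trans (ler_norm_sum _ _ _)); rewrite !mulr_sumr; apply: ler_sum => j _.
by rewrite !normrM -mulrA ler_pM ?mulr_ge0 ?ler_pM.
Qed.

Lemma opnorm_ub m p (M : 'M[R]_(m, p)) u v :
  \sum_i u i ^+ 2 <= 1 -> \sum_j v j ^+ 2 <= 1 -> `|bilin u M v| <= opnorm M.
Proof.
move=> hu hv; apply: ub_le_sup; last by exists u, v.
exists (\sum_i \sum_j `|M i j|) => _ [u' [v' [hu' [hv' ->]]]].
apply: (le_trans (ler_norm_sum _ _ _)); apply: ler_sum => i _.
apply: (le_trans (ler_norm_sum _ _ _)); apply: ler_sum => j _.
rewrite !normrM -[leRHS]mul1r -[leRHS]mulr1.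
by rewrite ler_pM ?mulr_ge0 ?ler_pM ?sum_sqr_le1_norm.
Qed.

Lemma sum_sqr0_le1 m : \sum_(i < m) (fun=> 0 : R) i ^+ 2 <= 1.
Proof. by rewrite big1 ?ler01 // => i _; rewrite expr0n. Qed.

Lemma opnorm_ge0 m p (M : 'M[R]_(m, p)) : 0 <= opnorm M.
Proof. by have := opnorm_ub M (sum_sqr0_le1 m) (sum_sqr0_le1 p); rewrite bilin0l normr0. Qed.

Lemma opnorm_le m p (M : 'M[R]_(m, p)) c :
  (forall u v, \sum_i u i ^+ 2 <= 1 -> \sum_j v j ^+ 2 <= 1 -> `|bilin u M v| <= c) ->
  opnorm M <= c.
Proof.
move=> h; apply: ge_sup; last by move=> _ [u [v [hu [hv ->]]]]; apply: h.
by exists `|bilin (fun=> 0) M (fun=> 0)|, (fun=> 0), (fun=> 0); rewrite !sum_sqr0_le1.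
Qed.

Lemma entry_le_opnorm m p (M : 'M[R]_(m, p)) i j : `|M i j| <= opnorm M.
Proof.
have unit_delta q (k : 'I_q) : \sum_l ((l == k)%:R : R) ^+ 2 <= 1.
  by rewrite (bigD1 k) //= eqxx big1 ?addr0 ?expr1n // => l /negbTE ->; rewrite expr0n.
have := opnorm_ub M (unit_delta _ i) (unit_delta _ j).
rewrite /bilin (bigD1 i) //= (bigD1 j) //= !eqxx !big1 ?addr0 ?mul1r ?mulr1 //.
  by move=> k /negbTE ->; rewrite big1 // => *; rewrite !mul0r.
by move=> k /negbTE ->; rewrite mulr0.
Qed.

Lemma sqrt_sum_sqr_eq0 m (u : 'I_m -> R) :
  Num.sqrt (\sum_i u i ^+ 2) = 0 -> u = fun=> 0.
Proof.
move=> h; apply/funext => i; apply/eqP; rewrite -sqrf_eq0 eq_le sqr_ge0 andbT.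
by apply: le_trans (sqr_le_sum_sqr u i) _; rewrite -(sqr_sqrtr (sum_sqr_ge0 u)) h expr0n.
Qed.

Lemma sum_sqr_normalize m (u : 'I_m -> R) :
  0 < Num.sqrt (\sum_i u i ^+ 2) ->
  \sum_i (u i / Num.sqrt (\sum_k u k ^+ 2)) ^+ 2 <= 1.
Proof.
move=> a_gt0; under eq_bigr do rewrite expr_div_n.
by rewrite -mulr_suml sqr_sqrtr ?sum_sqr_ge0 // divff // gt_eqF // -sqrtr_gt0.
Qed.

Lemma bilin_le_opnorm m p (M : 'M[R]_(m, p)) u v :
  `|bilin u M v| <= opnorm M * Num.sqrt (\sum_i u i ^+ 2) * Num.sqrt (\sum_j v j ^+ 2).
Proof.
set a := Num.sqrt _; set b := Num.sqrt _.
have rhs_ge0 : 0 <= opnorm M * a * b by rewrite !mulr_ge0 ?opnorm_ge0 ?sqrtr_ge0.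
have [/sqrt_sum_sqr_eq0 ->|a_neq0] := eqVneq a 0; first by rewrite bilin0l normr0.
have [/sqrt_sum_sqr_eq0 ->|b_neq0] := eqVneq b 0; first by rewrite bilin0r normr0.
have a_gt0 : 0 < a by rewrite lt_def a_neq0 sqrtr_ge0.
have b_gt0 : 0 < b by rewrite lt_def b_neq0 sqrtr_ge0.
have := opnorm_ub M (sum_sqr_normalize a_gt0) (sum_sqr_normalize b_gt0).
have -> : bilin (fun i => u i / a) M (fun j => v j / b) = bilin u M v / (a * b).
  rewrite /bilin mulr_suml; apply: eq_bigr => i _; rewrite mulr_suml.
  by apply: eq_bigr => j _; rewrite invfM; field; rewrite a_neq0 b_neq0.
by rewrite normrM normfV (gtr0_norm (mulr_gt0 a_gt0 b_gt0)) ler_pdivrMr ?mulr_gt0 // mulrA.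
Qed.

Lemma bilin_le_opnorm_AMGM m p (M : 'M[R]_(m, p)) (D U V : R) u v :
  opnorm M <= D -> \sum_i u i ^+ 2 <= U -> \sum_j v j ^+ 2 <= V ->
  `|bilin u M v| <= D * ((U + V) / 2).
Proof.
move=> hD hU hV; apply: (le_trans (bilin_le_opnorm M u v)); rewrite -mulrA.
have U0 := le_trans (sum_sqr_ge0 u) hU; have V0 := le_trans (sum_sqr_ge0 v) hV.
have geom_le_arith : Num.sqrt U * Num.sqrt V <= (U + V) / 2.
  have := sqr_ge0 (Num.sqrt U - Num.sqrt V).
  rewrite sqrrB !sqr_sqrtr //; lra.
rewrite ler_pM ?opnorm_ge0 ?mulr_ge0 ?sqrtr_ge0 //.
by apply: le_trans geom_le_arith; rewrite ler_pM ?sqrtr_ge0 ?ler_sqrt.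
Qed.

Lemma frob_le_tracenorm n (N B : 'M[R]_n) : opnorm B <= 1 -> frob N B <= tracenorm N.
Proof.
move=> hB; apply: ub_le_sup; last by exists B.
exists (\sum_i \sum_j `|N i j|) => _ [B' [hB' ->]].
apply: (le_trans (ler_norm _)).
apply: (le_trans (ler_norm_sum _ _ _)); apply: ler_sum => i _.
apply: (le_trans (ler_norm_sum _ _ _)); apply: ler_sum => j _.
by rewrite normrM ler_piMr // (le_trans (entry_le_opnorm B' i j)).
Qed.

Lemma tracenorm_le n (N : 'M[R]_n) c :
  (forall B : 'M[R]_n, opnorm B <= 1 -> frob N B <= c) -> tracenorm N <= c.
Proof.
move=> h; apply: ge_sup; last by move=> _ [B [hB ->]]; apply: h.
exists (frob N 0), 0; split=> //; apply: opnorm_le => u v _ _.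
by rewrite /bilin big1 ?normr0 ?ler01 // => i _; rewrite big1 // => j _; rewrite mxE mulr0 mul0r.
Qed.

Lemma tracenorm_ge0 n (N : 'M[R]_n) : 0 <= tracenorm N.
Proof.
apply: le_trans (frob_le_tracenorm N (_ : opnorm 0 <= 1)).
  by rewrite /frob big1 // => i _; rewrite big1 // => j _; rewrite mxE mulr0.
apply: opnorm_le => u v _ _; rewrite /bilin big1 ?normr0 ?ler01 // => i _.
by rewrite big1 // => j _; rewrite mxE mulr0 mul0r.
Qed.

Lemma tracenorm_rank_one_le n (u v : 'I_n -> R) :
  tracenorm (\matrix_(i, j) (u i * v j)) <=
  Num.sqrt (\sum_i u i ^+ 2) * Num.sqrt (\sum_j v j ^+ 2).
Proof.
apply: tracenorm_le => B hB.
have -> : frob (\matrix_(i, j) (u i * v j)) B = bilin u B v.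
  by apply: eq_bigr => i _; apply: eq_bigr => j _; rewrite mxE; ring.
apply: le_trans (ler_norm _) (le_trans (bilin_le_opnorm B u v) _).
by rewrite -mulrA ler_piMl ?mulr_ge0 ?sqrtr_ge0.
Qed.

Lemma opnorm_scale_le m p (M : 'M[R]_(m, p)) u v :
  (forall i, `|u i| <= 1) -> (forall j, `|v j| <= 1) ->
  opnorm (\matrix_(i, j) (u i * M i j * v j)) <= opnorm M.
Proof.
move=> u1 v1; apply: opnorm_le => x y hx hy.
have -> : bilin x (\matrix_(i, j) (u i * M i j * v j)) y =
          bilin (fun i => x i * u i) M (fun j => y j * v j).
  by apply: eq_bigr => i _; apply: eq_bigr => j _; rewrite mxE; ring.
have scaled_le q (z s : 'I_q -> R) : (forall i, `|s i| <= 1) ->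
    \sum_i z i ^+ 2 <= 1 -> \sum_i (z i * s i) ^+ 2 <= 1.
  move=> s1; apply: le_trans; apply: ler_sum => i _; rewrite exprMn ler_piMr ?sqr_ge0 //.
  by rewrite -real_normK ?num_real // expr_le1 ?s1.
by apply: opnorm_ub; apply: scaled_le.
Qed.

End MatrixNorms.

Section PrincipalSubmatrices.
Variables (R : realType) (n : nat) (S : {set 'I_n}).

Lemma sum_indicator (A : {set 'I_n}) : \sum_i ((i \in A)%:R : R) = #|A|%:R.
Proof. by rewrite -sumr_const [RHS]big_mkcond; apply: eq_bigr => i _; case: (i \in A). Qed.

Lemma sum_enum_val (f : 'I_n -> R) :
  (forall i, i \notin S -> f i = 0) -> \sum_i f i = \sum_(k < #|S|) f (enum_val k).
Proof.
move=> f0; rewrite (bigID (mem S)) /= [X in _ + X]big1 ?addr0 //.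
by rewrite big_enum_val.
Qed.

Lemma sum_enum_val_le (f : 'I_n -> R) :
  (forall i, 0 <= f i) -> \sum_(k < #|S|) f (enum_val k) <= \sum_i f i.
Proof.
move=> f_ge0; rewrite [leRHS](bigID (mem S)) /= -big_enum_val lerDl.
exact: sumr_ge0.
Qed.

Lemma sum_enum_val2 (f : 'I_n -> 'I_n -> R) :
  (forall i j, (i \notin S) || (j \notin S) -> f i j = 0) ->
  \sum_i \sum_j f i j = \sum_(k < #|S|) \sum_(k' < #|S|) f (enum_val k) (enum_val k').
Proof.
move=> f0; rewrite sum_enum_val => [|i iS]; last by rewrite big1 // => j _; rewrite f0 ?iS.
by apply: eq_bigr => k _; rewrite sum_enum_val // => j jS; rewrite f0 // jS orbT.
Qed.

Lemma frob_submxSS_le (N : 'M[R]_n) (P : 'M[R]_#|S|) (D : R) :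
  0 < D -> opnorm P <= D -> frob (submxSS S N) P <= D * tracenorm N.
Proof.
move=> D_gt0 hP; rewrite mulrC -ler_pdivrMr //.
have [S0|S_gt0] := posnP #|S|.
  rewrite /frob big1 ?mul0r ?tracenorm_ge0 // => k _.
  by exfalso; have := ltn_ord k; move: (nat_of_ord k) => k'; rewrite S0.
(* P / D, padded with zeros outside S x S, is a dual witness for the trace norm. *)
have x0S : enum_val (Ordinal S_gt0) \in S := enum_valP _.
pose rk := enum_rank_in x0S.
pose B : 'M[R]_n := \matrix_(i, j)
  (if (i \in S) && (j \in S) then P (rk i) (rk j) / D else 0).
have B_lift (f : 'I_n -> 'I_n -> R) : \sum_i \sum_j f i j * B i j =
    (\sum_k \sum_k' f (enum_val k) (enum_val k') * P k k') / D.
  rewrite sum_enum_val2 => [|i j /orP[] /negbTE iS]; last first.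
  - by rewrite mxE iS andbF mulr0.
  - by rewrite mxE iS mulr0.
  rewrite mulr_suml; apply: eq_bigr => k _; rewrite mulr_suml; apply: eq_bigr => k' _.
  by rewrite mxE !enum_valP /= /rk !enum_valK_in mulrA.
have hB : opnorm B <= 1.
  apply: opnorm_le => x y hx hy.
  have -> : bilin x B y = bilin (fun k => x (enum_val k)) P (fun k => y (enum_val k)) / D.
    transitivity (\sum_i \sum_j (x i * y j) * B i j).
      by apply: eq_bigr => i _; apply: eq_bigr => j _; ring.
    by rewrite B_lift; congr (_ / _); apply: eq_bigr => k _; apply: eq_bigr => k' _; ring.
  rewrite normrM normfV (gtr0_norm D_gt0) ler_pdivrMr // mul1r.
  apply: le_trans hP; apply: opnorm_ub.
  - apply: le_trans hx; apply: (sum_enum_val_le (f := fun i => x i ^+ 2)) => i.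
    exact: sqr_ge0.
  - apply: le_trans hy; apply: (sum_enum_val_le (f := fun i => y i ^+ 2)) => i.
    exact: sqr_ge0.
suff -> : frob (submxSS S N) P / D = frob N B by exact: frob_le_tracenorm.
rewrite /frob B_lift; congr (_ / _).
by apply: eq_bigr => k _; apply: eq_bigr => k' _; rewrite mxE.
Qed.

Lemma frob_submxSS_le_max_entry (N : 'M[R]_n) (P : 'M[R]_#|S|) (c : R) :
  0 <= c -> (forall i j, 0 <= N i j) -> (forall k k', `|P k k'| <= c) ->
  frob (submxSS S N) P <= c * \sum_i \sum_j N i j.
Proof.
move=> c_ge0 N_ge0 hP; rewrite mulr_sumr.
apply: le_trans (sum_enum_val_le (f := fun i => c * \sum_j N i j) _) => [|i]; last first.
  by rewrite mulr_ge0 ?sumr_ge0.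
apply: ler_sum => k _; rewrite mulr_sumr.
apply: le_trans (sum_enum_val_le (f := fun j => c * N (enum_val k) j) _) => [|j]; last first.
  exact: mulr_ge0.
apply: ler_sum => k' _; rewrite mxE mulrC; apply: le_trans (ler_norm _) _.
by rewrite normrM [`|N _ _|]ger0_norm //; exact: ler_wpM2r (N_ge0 _ _) _ _ (hP k k').
Qed.

End PrincipalSubmatrices.

Lemma card_le_ord n (A : {set 'I_n}) : (#|A| <= n)%N.
Proof. by rewrite -[n in (_ <= n)%N]card_ord max_card. Qed.

Lemma bilin_add_le (R : realType) m (Y Z : 'M[R]_m) (E c A1 A2 : R) u v :
  opnorm Y <= E -> (forall i j, `|Z i j| <= c) -> 0 <= c ->
  (forall i, `|u i| <= 1) -> (forall j, `|v j| <= 1) ->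
  \sum_i `|u i| <= A1 -> \sum_j `|v j| <= A2 ->
  bilin u (Y + Z) v <= E * ((A1 + A2) / 2) + c * A1 * A2.
Proof.
move=> hY hZ c0 u1 v1 hA1 hA2; rewrite bilinDm.
have hYuv := bilin_le_opnorm_AMGM hY (le_trans (sum_sqr_le_sum_norm u1) hA1)
                                   (le_trans (sum_sqr_le_sum_norm v1) hA2).
have hZuv : c * (\sum_i `|u i|) * (\sum_j `|v j|) <= c * A1 * A2.
  by rewrite ler_pM ?mulr_ge0 ?sumr_ge0 ?ler_wpM2l.
have := bilin_le_max_entry u v hZ.
have := ler_norm (bilin u Y v); have := ler_norm (bilin u Z v); lra.
Qed.

Section SignedSubmatrix.
Variables (R : realType) (n : nat) (S : {set 'I_n}) (Ahat F : 'M[R]_n) (lt : 'I_n -> R).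
Variables (Y Z : 'M[R]_#|S|).
Hypothesis hlt : is_sign_vector lt.
Hypothesis hAF : submxSS S (Ahat - F) = Y + Z.

Let s (k : 'I_#|S|) := lt (enum_val k).

Lemma norm_sign_vector i : `|lt i| = 1.
Proof. by case: (hlt i) => ->; rewrite ?normrN normr1. Qed.

Lemma submxSS_decomposition k k' :
  Ahat (enum_val k) (enum_val k') - F (enum_val k) (enum_val k') = Y k k' + Z k k'.
Proof. by have /matrixP/(_ k k') := hAF; rewrite !mxE. Qed.

Lemma frob_rowmat_submxSS (x : 'I_#|S| -> R) :
  frob (submxSS S (hadamard (Ahat - F) (outer lt))) (rowmat x) =
  bilin (fun k => x k * s k) (Y + Z) s.
Proof.
apply: eq_bigr => k _; apply: eq_bigr => k' _.
by rewrite !mxE -submxSS_decomposition /s; ring.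
Qed.

Lemma zeta_le_of_resolvable (zeta d K gamma : R) :
  0 < zeta -> 0 < d -> 10 ^+ 4 <= K -> gamma <= 1 -> (0 < #|S|)%N ->
  opnorm Y <= K * d -> (forall i j, `|Z i j| <= K * d / (zeta * n%:R)) ->
  resolvable (submxSS S (hadamard (Ahat - F) (outer lt)))
             (10 * d * K ^+ 3) (gamma * d * K) ->
  zeta <= 10 ^- 7.
Proof.
move=> zeta_gt0 d_gt0 K_ge gamma_le1 S_gt0 hY hZ hres.
have m_gt0 : 0 < #|S|%:R :> R by rewrite ltr0n.
have mn : #|S|%:R <= n%:R :> R by rewrite ler_nat card_le_ord.
have n_gt0 : 0 < n%:R :> R := lt_le_trans m_gt0 mn.
set m := #|S|%:R in m_gt0 mn; set P := K * d * m.
have K_gt0 : 0 < K := lt_le_trans (exprn_gt0 _ (ltr0n _ 10)) K_ge.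
have P_gt0 : 0 < P by rewrite !mulr_gt0.
have s1 k : `|s k| <= 1 by rewrite norm_sign_vector.
have sum_s : \sum_k `|s k| <= m.
  by rewrite (eq_bigr (fun=> 1)) ?sumr_const ?card_ord // => k _; rewrite norm_sign_vector.
have c_ge0 : 0 <= K * d / (zeta * n%:R) by apply/ltW/divr_gt0; apply: mulr_gt0.
have hbil : bilin s (Y + Z) s <= P + P / zeta.
  have := bilin_add_le hY hZ c_ge0 s1 s1 sum_s sum_s.
  have -> : K * d / (zeta * n%:R) * m * m = P / zeta * (m / n%:R).
    by rewrite /P; field; rewrite !gt_eqF.
  have : P / zeta * (m / n%:R) <= P / zeta.
    by apply: ler_piMr; [rewrite divr_ge0 ?ltW | rewrite ler_pdivrMr ?mul1r].
  rewrite /P; lra.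
pose x (k : 'I_#|S|) : R := 10 ^- 6.
have x01 k : 0 <= x k <= 1 by rewrite /x; apply/andP; split; lra.
have sum_x : \sum_k x k = 10 ^- 6 * m by rewrite sumr_const card_ord mulr_natr.
have := hres x x01; rewrite sum_x lexx frob_rowmat_submxSS bilinZl => /(_ isT).
rewrite (_ : 10 * d * K ^+ 3 * (10 ^- 6 * m) = 10 * 10 ^- 6 * (K ^+ 2 * P)); last first.
  by rewrite /P; ring.
rewrite (_ : gamma * d * K * m = gamma * P); last by rewrite /P; ring.
move=> hres_x.
have K2P : 10 ^+ 8 * P <= K ^+ 2 * P.
  rewrite ler_pM2r // (_ : 10 ^+ 8 = (10 ^+ 4) ^+ 2); last by rewrite -exprM.
  by rewrite !expr2 ler_pM ?exprn_ge0.
have gammaP : gamma * P <= P by apply: ler_piMl => //; exact: ltW.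
rewrite leNgt; apply/negP => zeta_big.
have Pzeta : P / zeta <= 10 ^+ 7 * P.
  rewrite ler_pdivrMr // mulrAC; apply: ler_peMl; first exact: ltW.
  by rewrite -ler_pdivrMl ?exprn_gt0 // mulr1 ltW.
lra.
Qed.

End SignedSubmatrix.

Lemma indicator_bounds (R : realType) (b : bool) : 0 <= (b%:R : R) <= 1.
Proof. by case: b; rewrite ?lexx ?ler01. Qed.

(* Read [q] as sqrt K, [b] as the number of bad rows, [X] as their total slack
   sum (1 - w_i) and [t] as (theta + gamma) n. *)
Lemma bad_rows_arith_contra (R : realType) (q b X t : R) :
  100 <= q -> 0 < b -> b / q <= X -> t < b * q / 10 ->
  20 * (q ^+ 4 * X) <= 10 * (q ^+ 2 * b) + 4 * b + 5 * t -> False.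
Proof.
move=> q_ge b_gt0 X_ge t_lt.
have q_gt0 : 0 < q by lra.
have : q ^+ 3 * b <= q ^+ 4 * X.
  rewrite (_ : q ^+ 3 * b = q ^+ 4 * (b / q)); last by field; rewrite gt_eqF.
  by apply: ler_wpM2l => //; rewrite exprn_ge0 // ltW.
have q100 : 0 <= q - 100 by rewrite subr_ge0.
have := mulr_ge0 (mulr_ge0 q100 (exprn_ge0 2 (ltW q_gt0))) (ltW b_gt0).
have := mulr_ge0 (mulr_ge0 q100 (ltW q_gt0)) (ltW b_gt0).
have := mulr_ge0 q100 (ltW b_gt0).
nra.
Qed.

Definition row_selector_constraint (R : realType) n (Ahat W : 'M[R]_n) (l w : 'I_n -> R)
    (zeta d K rho : R) : Prop :=
  forall (rho' : R) (M : 'M[R]_n) (x : 'I_n -> R),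
    rho / K <= rho' <= zeta -> rowsel rho' (K * rho') M x ->
    frob (hadamard (hadamard Ahat (outer l)) W) M >=
      10 * d * K ^+ 2 * (K * (\sum_i x i * (1 - w i)) - rho' * n%:R).

Section BadRows.
Variables (R : realType) (n : nat) (Ahat F W N : 'M[R]_n) (l lt w : 'I_n -> R).
Variables (S B : {set 'I_n}) (Y Z : 'M[R]_#|S|).
Hypotheses (hl : is_sign_vector l) (hlt : is_sign_vector lt).
Hypothesis hBS : {subset B <= S}.
Hypothesis hBl : {in B, forall i, l i != lt i}.

Definition agreeS := [set j in S | l j == lt j].

Let bad i : R := (i \in B)%:R.

Definition bad_selector_defect : 'M[R]_n := \matrix_(i, j) (bad i * (j \notin agreeS)%:R).

Lemma bad_selector_entry i j :
  (rowmat bad - bad_selector_defect) i j = ((i \in B) && (j \in agreeS))%:R.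
Proof.
rewrite !mxE /bad; case: (i \in B); case: (j \in agreeS);
  by rewrite /= ?mulr1 ?mulr0 ?subrr ?subr0.
Qed.

Lemma rowsel_bad_selector (K rho' : R) :
  0 <= K -> 0 <= rho' -> rho' * n%:R = #|B|%:R -> #|~: agreeS|%:R <= K * #|B|%:R ->
  rowsel rho' (K * rho') (rowmat bad - bad_selector_defect) bad.
Proof.
move=> K_ge0 rho'_ge0 rho'n hG; set b := #|B|%:R in rho'n hG *; set g := #|~: agreeS|%:R in hG.
have sum_bad : \sum_i bad i = b := sum_indicator _ B.
have sum_notG : \sum_j ((j \notin agreeS)%:R : R) = g.
  by rewrite /g -sum_indicator; apply: eq_bigr => j _; rewrite finset.in_setC.
have sqr_ind (c : bool) : (c%:R : R) ^+ 2 = c%:R by case: c; rewrite ?expr0n ?expr1n.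
have sqrt_n : Num.sqrt (rho' * (K * rho')) * n%:R = Num.sqrt (b * (K * b)).
  rewrite -rho'n (_ : rho' * n%:R * (K * (rho' * n%:R)) = rho' * (K * rho') * n%:R ^+ 2).
    by rewrite [RHS]sqrtrM ?mulr_ge0 // sqrtr_sqr ger0_norm.
  by ring.
split; first by move=> i j; rewrite bad_selector_entry indicator_bounds.
split; first by move=> i; apply: indicator_bounds.
split; first by rewrite sum_bad rho'n.
exists bad_selector_defect; split=> //; split.
  by move=> i j; rewrite mxE -natrM mulnb indicator_bounds.
split.
  have -> : \sum_i \sum_j `|bad_selector_defect i j| = b * g.
    rewrite -sum_bad -sum_notG mulr_suml; apply: eq_bigr => i _; rewrite mulr_sumr.
    by apply: eq_bigr => j _; rewrite mxE ger0_norm // -natrM ler0n.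
  rewrite -exprMn sqrt_n sqr_sqrtr ?mulr_ge0 ?ler0n //.
  by rewrite ler_wpM2l ?ler0n.
apply: le_trans (tracenorm_rank_one_le _ _) _.
rewrite (eq_bigr _ (fun i _ => sqr_ind _)) (eq_bigr _ (fun j _ => sqr_ind _)) sum_bad sum_notG.
by rewrite sqrt_n -sqrtrM ?ler0n // ler_sqrt ?mulr_ge0 ?ler0n // ler_wpM2l ?ler0n.
Qed.

Hypothesis hAF : submxSS S (Ahat - F) = Y + Z.
Hypothesis hF : forall k k', 0 <= submxSS S (hadamard F (outer lt)) k k'.
Hypothesis hW0 : forall i j, 0 <= W i j.

Let a (k : 'I_#|S|) := bad (enum_val k).
Let sg (k : 'I_#|S|) := lt (enum_val k).
Let g (k : 'I_#|S|) : R := (enum_val k \in agreeS)%:R.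

Lemma bad_outside_S i : i \notin S -> i \notin B.
Proof. by apply: contra => /hBS. Qed.

Lemma frob_bad_selector_signed :
  frob (hadamard (hadamard Ahat (outer l)) W) (rowmat bad - bad_selector_defect) <=
  \sum_k \sum_k'
    - (a k * sg k * (Y k k' + Z k k') * (g k' * sg k') * W (enum_val k) (enum_val k')).
Proof.
rewrite /frob (sum_enum_val2 (S := S)) => [|i j]; last first.
  rewrite mxE bad_selector_entry => /orP[/bad_outside_S/negbTE -> | jS]; first by rewrite mulr0.
  by rewrite inE (negbTE jS) andbF mulr0.
apply: ler_sum => k _; apply: ler_sum => k' _.
rewrite bad_selector_entry !mxE /a /g /bad /sg -(submxSS_decomposition hAF).
have := hF k k'; have := hW0 (enum_val k) (enum_val k'); rewrite !mxE.
set i := enum_val k; set j := enum_val k'.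
case: (boolP (i \in B)) => [iB|_] /=; last by rewrite !(mul0r, mulr0, oppr0).
case: (boolP (j \in agreeS)) => [|_] /=; last by rewrite !(mul0r, mulr0, oppr0).
rewrite inE => /andP[_ /eqP lj] W_ge0 F_ge0.
have li : l i = - lt i by case: (hl i) (hlt i) (hBl iB) => ->; case=> ->; rewrite ?eqxx ?opprK.
rewrite -subr_ge0 li lj.
have -> : - (1 * lt i * (Ahat i j - F i j) * (1 * lt j) * W i j)
          - Ahat i j * (- lt i * lt j) * W i j * 1 = F i j * (lt i * lt j) * W i j by ring.
exact: mulr_ge0.
Qed.

Hypothesis hWN : forall i j, W i j = 1 - w i - w j + N i j.

Let h (k : 'I_#|S|) : R := (l (enum_val k) != lt (enum_val k))%:R.
Let om (k : 'I_#|S|) := w (enum_val k).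
Let x (k : 'I_#|S|) := a k * (1 - om k).

Lemma agreeS_indicator k : g k = 1 - h k.
Proof. by rewrite /g /h inE enum_valP; case: eqP; rewrite ?subr0 ?subrr. Qed.

Lemma frob_bad_selector_expand :
  \sum_k \sum_k'
    - (a k * sg k * (Y k k' + Z k k') * (g k' * sg k') * W (enum_val k) (enum_val k')) =
  - bilin (fun k => x k * sg k) (Y + Z) sg
  + bilin (fun k => x k * sg k) (Y + Z) (fun k => h k * sg k)
  + bilin (fun k => a k * sg k) (Y + Z) (fun k => g k * om k * sg k)
  + frob (submxSS S N) (\matrix_(k, k') (- (a k * sg k) * Y k k' * (g k' * sg k')))
  + frob (submxSS S N) (\matrix_(k, k') (- (a k * sg k) * Z k k' * (g k' * sg k'))).
Proof.
rewrite /bilin /frob -sumrN -!big_split /=; apply: eq_bigr => k _.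
rewrite -sumrN -!big_split /=; apply: eq_bigr => k' _.
by rewrite !mxE hWN agreeS_indicator /x /om; ring.
Qed.

Hypothesis hw : forall i, 0 <= w i <= 1.
Hypothesis hN0 : forall i j, 0 <= N i j.

Lemma sum_restricted_bad : \sum_k a k = #|B|%:R.
Proof.
rewrite -(sum_indicator _ B) (sum_enum_val (S := S)) // => i /bad_outside_S.
by move/negbTE; rewrite /bad => ->.
Qed.

Lemma sum_restricted_slack : \sum_k x k = \sum_i bad i * (1 - w i).
Proof.
rewrite [RHS](sum_enum_val (S := S)) // => i /bad_outside_S.
by move/negbTE; rewrite /bad => ->; rewrite mul0r.
Qed.

Lemma bad_slack_bounds i : 0 <= bad i * (1 - w i) <= bad i.
Proof.
have /andP[w0 w1] := hw i.
by rewrite /bad; case: (i \in B) => /=; rewrite ?mul0r ?lexx // mul1r; apply/andP; split; lra.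
Qed.

Lemma bad_slack_unit i : 0 <= bad i * (1 - w i) <= 1.
Proof.
have /andP[-> /le_trans ->] := bad_slack_bounds i;
  by case/andP: (indicator_bounds R (i \in B)).
Qed.

Lemma agree_weight_unit i : 0 <= (i \in agreeS)%:R * w i <= 1.
Proof. by case: (i \in agreeS) => /=; rewrite ?mul0r ?lexx ?ler01 ?mul1r ?hw. Qed.

Lemma sum_bad_slack_le : \sum_i bad i * (1 - w i) <= #|B|%:R.
Proof.
rewrite -sum_restricted_slack -sum_restricted_bad ler_sum // => k _.
by case/andP: (bad_slack_bounds (enum_val k)).
Qed.

Lemma sum_agree_weight_le : \sum_i (i \in agreeS)%:R * w i <= \sum_i w i.
Proof.
apply: ler_sum => i _; have /andP[w0 _] := hw i.
by case: (i \in agreeS); rewrite /= ?mul0r ?mul1r.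
Qed.

Lemma norm_restricted_sign_mul u k : `|u * sg k| = `|u|.
Proof. by rewrite normrM (norm_sign_vector hlt) mulr1. Qed.

Lemma restricted_sign_mul_le1 (f : 'I_n -> R) k :
  (forall i, 0 <= f i <= 1) -> `|f (enum_val k) * sg k| <= 1.
Proof.
move=> f01; rewrite norm_restricted_sign_mul.
by case/andP: (f01 (enum_val k)) => f0 f1; rewrite ger0_norm.
Qed.

Lemma sum_restricted_sign_mul_le (f : 'I_n -> R) :
  (forall i, 0 <= f i) -> \sum_k `|f (enum_val k) * sg k| <= \sum_i f i.
Proof.
move=> f0; under eq_bigr do rewrite norm_restricted_sign_mul ger0_norm //.
exact: sum_enum_val_le.
Qed.

Lemma restricted_bad_sign_le1 k : `|a k * sg k| <= 1.
Proof. exact: (restricted_sign_mul_le1 (f := bad) k (fun=> indicator_bounds R _)). Qed.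

Lemma restricted_agree_sign_le1 k : `|g k * sg k| <= 1.
Proof.
exact: (restricted_sign_mul_le1 (f := fun i => (i \in agreeS)%:R) k (fun=> indicator_bounds R _)).
Qed.

Lemma resolvability_term_ge (d1 d2 : R) :
  resolvable (submxSS S (hadamard (Ahat - F) (outer lt))) d1 d2 ->
  #|B|%:R <= 10 ^- 6 * #|S|%:R :> R ->
  d1 * (\sum_i bad i * (1 - w i)) - d2 * #|S|%:R <= bilin (fun k => x k * sg k) (Y + Z) sg.
Proof.
move=> hres hB; rewrite -(frob_rowmat_submxSS lt hAF) -sum_restricted_slack.
apply: hres => [k|]; first exact: bad_slack_unit.
by rewrite sum_restricted_slack (le_trans sum_bad_slack_le).
Qed.

Section FormBounds.
Variables (E c : R).
Hypotheses (E_gt0 : 0 < E) (hY : opnorm Y <= E).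
Hypotheses (c_ge0 : 0 <= c) (hZ : forall k k', `|Z k k'| <= c).

Lemma bilin_disagree_le (theta : R) :
  \sum_i ((l i != lt i)%:R : R) <= theta * n%:R ->
  bilin (fun k => x k * sg k) (Y + Z) (fun k => h k * sg k) <=
  E * ((#|B|%:R + theta * n%:R) / 2) + c * #|B|%:R * (theta * n%:R).
Proof.
move=> hdis; apply: bilin_add_le => // [k|k||].
- exact: (restricted_sign_mul_le1 (f := fun i => bad i * (1 - w i)) k bad_slack_unit).
- exact: (restricted_sign_mul_le1 (f := fun i => (l i != lt i)%:R) k (fun=> indicator_bounds R _)).
- apply: le_trans sum_bad_slack_le.
  by apply: sum_restricted_sign_mul_le => i; case/andP: (bad_slack_unit i).
- apply: le_trans hdis.
  exact: (sum_restricted_sign_mul_le (f := fun i => (l i != lt i)%:R) (fun=> ler0n _ _)).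
Qed.

Lemma bilin_weight_le (rho : R) :
  \sum_i w i <= rho * n%:R ->
  bilin (fun k => a k * sg k) (Y + Z) (fun k => g k * om k * sg k) <=
  E * ((#|B|%:R + rho * n%:R) / 2) + c * #|B|%:R * (rho * n%:R).
Proof.
move=> hwsum; apply: bilin_add_le => // [k|k||].
- exact: restricted_bad_sign_le1.
- exact: (restricted_sign_mul_le1 (f := fun i => (i \in agreeS)%:R * w i) k agree_weight_unit).
- apply: le_trans (sum_restricted_sign_mul_le (f := bad) (fun=> ler0n _ _)) _.
  by rewrite sum_indicator.
- apply: le_trans (le_trans sum_agree_weight_le hwsum).
  by apply: sum_restricted_sign_mul_le => i; case/andP: (agree_weight_unit i).
Qed.

Lemma defect_term_le (rho : R) :
  tracenorm N <= rho * n%:R -> \sum_i \sum_j N i j <= rho ^+ 2 * n%:R ^+ 2 ->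
  frob (submxSS S N) (\matrix_(k, k') (- (a k * sg k) * Y k k' * (g k' * sg k'))) +
  frob (submxSS S N) (\matrix_(k, k') (- (a k * sg k) * Z k k' * (g k' * sg k'))) <=
  E * (rho * n%:R) + c * (rho ^+ 2 * n%:R ^+ 2).
Proof.
move=> hNtr hNsum.
have a_sg1 k : `|- (a k * sg k)| <= 1 by rewrite normrN restricted_bad_sign_le1.
have g_sg1 := restricted_agree_sign_le1.
apply: lerD.
  have hP := le_trans (opnorm_scale_le Y a_sg1 g_sg1) hY.
  by apply: le_trans (frob_submxSS_le N E_gt0 hP) _; rewrite ler_pM2l.
apply: le_trans _ (ler_wpM2l c_ge0 hNsum); apply: frob_submxSS_le_max_entry => // k k'.
rewrite mxE normrM -[c]mulr1; apply: ler_pM; rewrite ?normr_ge0 //.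
by rewrite normrM -[c]mul1r; apply: ler_pM; rewrite ?normr_ge0.
Qed.

Lemma frob_bad_selector_le (d1 d2 theta rho : R) :
  tracenorm N <= rho * n%:R -> \sum_i \sum_j N i j <= rho ^+ 2 * n%:R ^+ 2 ->
  \sum_i ((l i != lt i)%:R : R) <= theta * n%:R -> \sum_i w i <= rho * n%:R ->
  resolvable (submxSS S (hadamard (Ahat - F) (outer lt))) d1 d2 ->
  #|B|%:R <= 10 ^- 6 * #|S|%:R :> R ->
  frob (hadamard (hadamard Ahat (outer l)) W) (rowmat bad - bad_selector_defect) <=
  - (d1 * (\sum_i bad i * (1 - w i)) - d2 * #|S|%:R)
  + (E * ((#|B|%:R + theta * n%:R) / 2) + c * #|B|%:R * (theta * n%:R))
  + (E * ((#|B|%:R + rho * n%:R) / 2) + c * #|B|%:R * (rho * n%:R))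
  + (E * (rho * n%:R) + c * (rho ^+ 2 * n%:R ^+ 2)).
Proof.
move=> hNtr hNsum hdis hwsum hres hB.
apply: le_trans frob_bad_selector_signed _; rewrite frob_bad_selector_expand.
have := resolvability_term_ge hres hB; have := bilin_disagree_le hdis.
have := bilin_weight_le hwsum; have := defect_term_le hNtr hNsum.
lra.
Qed.

End FormBounds.

Lemma card_compl_agreeS_le (theta gamma : R) :
  (1 - gamma) * n%:R <= #|S|%:R -> \sum_i ((l i != lt i)%:R : R) <= theta * n%:R ->
  #|~: agreeS|%:R <= (theta + gamma) * n%:R.
Proof.
move=> hS hdis; rewrite -sum_indicator.
have notG_le j : ((j \in ~: agreeS)%:R : R) <= (j \in ~: S)%:R + (l j != lt j)%:R.
  by rewrite -natrD ler_nat !finset.in_setC inE negb_and; case: (j \in S); case: (l j == lt j).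
apply: le_trans (ler_sum _ (fun j _ => notG_le j)) _.
rewrite big_split /= sum_indicator.
have : #|~: S|%:R + #|S|%:R = n%:R :> R by rewrite -natrD addnC cardsC card_ord.
lra.
Qed.

Lemma card_bad_le_disagreements : #|B|%:R <= \sum_i ((l i != lt i)%:R : R).
Proof.
rewrite -sum_indicator; apply: ler_sum => i _.
by case: (boolP (i \in B)) => [/hBl -> | _] //=; rewrite ler0n.
Qed.

Lemma sum_bad_slack_ge (q : R) :
  {in B, forall i, w i <= 1 - q^-1} -> #|B|%:R / q <= \sum_i bad i * (1 - w i).
Proof.
move=> hBw; rewrite -sum_indicator mulr_suml; apply: ler_sum => i _.
rewrite /bad; case: (boolP (i \in B)) => [iB | _] /=; last by rewrite !mul0r.
by rewrite !mul1r; have := hBw i iB; lra.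
Qed.

Lemma sdp_bad_selector_ge (zeta d K rho : R) :
  row_selector_constraint Ahat W l w zeta d K rho ->
  0 < n%:R :> R -> 0 < K -> rho * n%:R <= K * #|B|%:R -> #|B|%:R <= zeta * n%:R ->
  #|~: agreeS|%:R <= K * #|B|%:R ->
  10 * d * K ^+ 2 * (K * (\sum_i bad i * (1 - w i)) - #|B|%:R) <=
  frob (hadamard (hadamard Ahat (outer l)) W) (rowmat bad - bad_selector_defect).
Proof.
move=> hsdp n_gt0 K_gt0 rho_le b_le G_le.
have rho'n : #|B|%:R / n%:R * n%:R = #|B|%:R :> R by rewrite divfK ?gt_eqF.
rewrite -[in X in X <= _]rho'n; apply: hsdp; last first.
  by apply: rowsel_bad_selector => //; [exact: ltW | rewrite divr_ge0 ?ler0n].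
apply/andP; split; last by rewrite ler_pdivrMr.
by rewrite ler_pdivrMr // mulrAC ler_pdivlMr // [_ * K]mulrC.
Qed.

Section Counting.
Variables (zeta d K theta gamma rho : R).
Hypotheses (zeta_gt0 : 0 < zeta) (zeta_small : zeta <= 10 ^- 7) (d_gt0 : 0 < d).
Hypotheses (K_ge : 10 ^+ 4 <= K) (theta_le : theta <= zeta) (gamma_le : gamma <= zeta).
Hypotheses (rho_ge0 : 0 <= rho) (rho_le : rho <= theta + gamma).
Hypothesis hdis : \sum_i ((l i != lt i)%:R : R) <= theta * n%:R.
Hypothesis hS : (1 - gamma) * n%:R <= #|S|%:R.
Hypothesis hY : opnorm Y <= K * d.
Hypothesis hZ : forall k k', `|Z k k'| <= K * d / (zeta * n%:R).
Hypothesis hres : resolvable (submxSS S (hadamard (Ahat - F) (outer lt)))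
                             (10 * d * K ^+ 3) (gamma * d * K).
Hypothesis hN : pseudorect rho N.
Hypothesis hwsum : \sum_i w i <= rho * n%:R.
Hypothesis hsdp : row_selector_constraint Ahat W l w zeta d K rho.

Lemma theta_ge0 : 0 < n%:R :> R -> 0 <= theta.
Proof. by move=> n_gt0; rewrite -(pmulr_lge0 _ n_gt0) (le_trans _ hdis) ?sumr_ge0. Qed.

Lemma gamma_ge0 : 0 < n%:R :> R -> 0 <= gamma.
Proof.
move=> n_gt0; rewrite -(pmulr_lge0 _ n_gt0).
have mn : #|S|%:R <= n%:R :> R by rewrite ler_nat card_le_ord.
by have := le_trans hS mn; rewrite mulrBl mul1r lerBlDr lerDl.
Qed.

Lemma bad_rows_slack_le :
  0 < n%:R :> R -> (theta + gamma) * n%:R <= K * #|B|%:R ->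
  20 * (K ^+ 2 * \sum_i bad i * (1 - w i)) <=
  10 * (K * #|B|%:R) + 4 * #|B|%:R + 5 * ((theta + gamma) * n%:R).
Proof.
move=> n_gt0; set b := #|B|%:R; set t := (theta + gamma) * n%:R => t_le_Kb.
have K_gt0 : 0 < K := lt_le_trans (exprn_gt0 _ (ltr0n _ 10)) K_ge.
have E_gt0 : 0 < K * d by rewrite mulr_gt0.
have mn : #|S|%:R <= n%:R :> R by rewrite ler_nat card_le_ord.
have [theta0 gamma0] := (theta_ge0 n_gt0, gamma_ge0 n_gt0).
have rho_n : rho * n%:R <= t by rewrite ler_wpM2r.
have theta_n : theta * n%:R <= t by rewrite ler_wpM2r // lerDl.
have gamma_m : gamma * #|S|%:R <= t.
  by apply: le_trans (ler_wpM2l gamma0 mn) _; rewrite /t mulrDl lerDr mulr_ge0 // ltW.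
have b_le : b <= zeta * n%:R.
  by apply: le_trans card_bad_le_disagreements (le_trans hdis _); rewrite ler_wpM2r.
have b_small : b <= 10 ^- 6 * #|S|%:R.
  have : gamma * n%:R <= zeta * n%:R by rewrite ler_wpM2r.
  have : zeta * n%:R <= 10 ^- 7 * n%:R by rewrite ler_wpM2r.
  (* [hS] restated: lra does not recognise the ordered-ring instance [hS] elaborates to. *)
  have : n%:R - gamma * n%:R <= #|S|%:R by rewrite -{1}[n%:R]mul1r -mulrBl.
  lra.
have [_ [hNsum hNtr]] := hN.
have hNsum' : \sum_i \sum_j N i j <= rho ^+ 2 * n%:R ^+ 2.
  by apply: le_trans hNsum; apply: ler_sum => i _; apply: ler_sum => j _; rewrite ger0_norm.
have c_ge0 : 0 <= K * d / (zeta * n%:R) by rewrite divr_ge0 ?mulr_ge0 ?ltW.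
have LB := sdp_bad_selector_ge hsdp n_gt0 K_gt0 (le_trans rho_n t_le_Kb) b_le
  (le_trans (card_compl_agreeS_le hS hdis) t_le_Kb).
have UB := frob_bad_selector_le E_gt0 hY c_ge0 hZ hNtr hNsum' hdis hwsum hres b_small.
set X := \sum_i bad i * (1 - w i) in LB UB *; set c := K * d / (zeta * n%:R) in UB c_ge0.
have c_le r k : r <= zeta *+ k -> c * (r * n%:R) <= K * d *+ k.
  move=> r_le; rewrite (_ : c * (r * n%:R) = K * d * (r / zeta)); last first.
    by rewrite /c; field; rewrite !gt_eqF.
  by rewrite -mulr_natr ler_pM2l // ler_pdivrMr // mulr_natl.
have c_theta := c_le theta 1%N theta_le.
have c_rho := c_le rho 2%N (le_trans rho_le (lerD theta_le gamma_le)).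
rewrite -(ler_pM2l E_gt0).
have := ler_wpM2r (ler0n _ #|B|) c_theta; have := ler_wpM2r (ler0n _ #|B|) c_rho.
have := ler_wpM2r (mulr_ge0 rho_ge0 (ltW n_gt0)) c_rho.
have := ler_wpM2l (ltW E_gt0) rho_n; have := ler_wpM2l (ltW E_gt0) theta_n.
have := ler_wpM2l (ltW E_gt0) gamma_m.
rewrite /b /t in LB UB *; lra.
Qed.

Lemma card_bad_rows_le :
  {in B, forall i, w i <= 1 - (Num.sqrt K)^-1} ->
  #|B|%:R <= 10 * (theta + gamma) * n%:R / Num.sqrt K.
Proof.
move=> hBw; have [n_le0|n_gt0] := lerP (n%:R : R) 0.
  have n0 : n%:R = 0 :> R by apply/le_anti; rewrite n_le0 ler0n.
  by rewrite n0 mulr0 mul0r -n0 ler_nat card_le_ord.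
set q := Num.sqrt K; set b := #|B|%:R; set t := (theta + gamma) * n%:R.
have qK : q ^+ 2 = K by rewrite sqr_sqrtr // (le_trans _ K_ge) ?exprn_ge0.
have q_ge : 100 <= q.
  have q_ge0 : 0 <= q := sqrtr_ge0 K.
  have : 10 ^+ 4 <= q ^+ 2 by rewrite qK.
  nra.
have t_ge0 : 0 <= t by rewrite mulr_ge0 ?addr_ge0 ?theta_ge0 ?gamma_ge0.
rewrite (_ : 10 * (theta + gamma) * n%:R = 10 * t); last by rewrite mulrA.
rewrite leNgt ltr_pdivrMr ?(lt_le_trans _ q_ge) //; apply/negP => hb.
have b_gt0 : 0 < b by nra.
have q_le_K : q <= K.
  rewrite -qK expr2; apply: ler_peMl; first exact: sqrtr_ge0.
  by apply: le_trans q_ge; lra.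
have t_le_Kb : t <= K * b by rewrite [K * b]mulrC; nra.
apply: (bad_rows_arith_contra (t := t) q_ge b_gt0 (sum_bad_slack_ge hBw)).
  by rewrite ltr_pdivlMr // mulrC.
by rewrite (_ : 4 = 2 * 2)%N // exprM qK; apply: bad_rows_slack_le.
Qed.

End Counting.

End BadRows.

Lemma sum_disagreements_le (R : realType) n (l lt : 'I_n -> R) (theta : R) :
  (1 - theta) * n%:R <= #|[set i | l i == lt i]|%:R ->
  \sum_i ((l i != lt i)%:R : R) <= theta * n%:R.
Proof.
move=> hagree.
have -> : \sum_i ((l i != lt i)%:R : R) = #|~: [set i | l i == lt i]|%:R.
  by rewrite -sum_indicator; apply: eq_bigr => i _; rewrite finset.in_setC inE.
have : #|[set i | l i == lt i]|%:R + #|~: [set i | l i == lt i]|%:R = n%:R :> R.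
  by rewrite -natrD cardsC card_ord.
lra.
Qed.

Unset Implicit Arguments.

Theorem mainTheorem13 (R : realType) (n : nat) (Ahat : 'M[R]_n)
    (l lt2 : 'I_n -> R) (zeta d K theta gamma : R)
    (S : {set 'I_n}) (F : 'M[R]_n) (Y Z : 'M[R]_#|S|) :
  is_sign_vector l -> is_sign_vector lt2 ->
  0 < zeta < 1 -> 0 < d -> 10 ^+ 4 <= K ->
  (1 - theta) * n%:R <= #|[set i | l i == lt2 i]|%:R ->
  theta <= zeta ->
  gamma <= zeta ->
  (1 - gamma) * n%:R <= #|S|%:R ->
  (forall i j : 'I_#|S|, 0 <= submxSS S (hadamard F (outer lt2)) i j) ->
  submxSS S (Ahat - F) = Y + Z ->
  opnorm Y <= K * d ->
  (forall i j : 'I_#|S|, `|Z i j| <= K * d / (zeta * n%:R)) ->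
  resolvable (submxSS S (hadamard (Ahat - F) (outer lt2)))
             (10 * d * K ^+ 3) (gamma * d * K) ->
  forall (rho : R) (w : 'I_n -> R) (W N : 'M[R]_n),
    boosting_feasible Ahat l zeta d K rho w W N ->
    rho <= theta + gamma ->
    #|[set i in S | (w i <= 1 - (Num.sqrt K)^-1) && (l i != lt2 i)]|%:R
      <= 10 * (theta + gamma) * n%:R / Num.sqrt K.
Proof.
move=> hl hlt /andP[zeta_gt0 zeta_lt1] d_gt0 K_ge hagree theta_le gamma_le hS hF hAF
  hY hZ hres rho w W N [/andP[rho_ge0 _] [hN [hw [hwsum [hW0 [hWN hsdp]]]]]] rho_le.
set B := [set i in S | _].
have hBS : {subset B <= S} by move=> i; rewrite inE => /andP[].
have hBl : {in B, forall i, l i != lt2 i} by move=> i; rewrite !inE => /and3P[].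
have hBw : {in B, forall i, w i <= 1 - (Num.sqrt K)^-1} by move=> i; rewrite !inE => /and3P[].
have hN0 i j : 0 <= N i j by case: hN => /(_ i j) /andP[].
have [S0|S_gt0] := posnP #|S|.
  have -> : #|B| = 0%N.
    by apply/eqP; rewrite -leqn0 -S0 subset_leq_card //; apply/fintype.subsetP.
  have n0 : n%:R = 0 :> R by apply/le_anti; rewrite ler0n andbT; move: hS; rewrite S0; nra.
  by rewrite n0 mulr0 mul0r.
have gamma_le1 : gamma <= 1 := ltW (le_lt_trans gamma_le zeta_lt1).
have zeta_small := zeta_le_of_resolvable hlt hAF zeta_gt0 d_gt0 K_ge gamma_le1 S_gt0 hY hZ hres.
exact: (card_bad_rows_le hl hlt hBS hBl hAF hF hW0 hWN hw hN0 zeta_gt0 zeta_small d_gt0 K_ge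
  theta_le gamma_le rho_ge0 rho_le (sum_disagreements_le hagree) hS hY hZ hres hN hwsum hsdp hBw).
Qed.
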